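(* Let $X\subseteq\mathbb{R}^k$ be a set of feasible alternatives, $\mathbf{f}=(f_1,f_2):X\to\mathbb{R}^2$ a vector criterion and $Y=\mathbf{f}(X)$. Consider three decision makers whose preference relations $\succ_1,\succ_2,\succ_3$ on $\mathbb{R}^2$ are cone relations with cones $K_1,K_2,K_3$, each $K_l$ being a convex pointed cone with $\mathbb{R}^2_+\subseteq K_l$ and $\mathbf{0}_2\notin K_l$. For $l=1,2,3$ let $$\mathbf{y}^{(l)}=\begin{pmatrix} w_1^{(l)}\\ -w_2^{(l)}\end{pmatrix},\qquad \bar{\mathbf{y}}^{(l)}=\begin{pmatrix} -v_1^{(l)}\\ v_2^{(l)}\end{pmatrix},$$ with all $w_i^{(l)},v_i^{(l)}>0$, be given such that $\mathbf{y}^{(l)}\succ_l\mathbf{0}_2$ and $\bar{\mathbf{y}}^{(l)}\succ_l\mathbf{0}_2$, where no two of $\mathbf{y}^{(1)},\mathbf{y}^{(2)},\mathbf{y}^{(3)}$ are codirectional, no two of $\bar{\mathbf{y}}^{(1)},\bar{\mathbf{y}}^{(2)},\bar{\mathbf{y}}^{(3)}$ are codirectional, and $w_1^{(l)}v_2^{(l)}-w_2^{(l)}v_1^{(l)}>0$ for every $l\in\{1,2,3\}$. Put $W(l,s)=w_1^{(l)}w_2^{(s)}-w_2^{(l)}w_1^{(s)}$ and $V(l,s)=v_2^{(l)}v_1^{(s)}-v_1^{(l)}v_2^{(s)}$. Then there exist unique indices $s_1,s_2\in\{1,2,3\}$ such that $W(l_1,s_1)>0$, $W(s_1,k_1)>0$,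 $V(l_2,s_2)>0$, $V(s_2,k_2)>0$ for some indices $l_q,k_q\in\{1,2,3\}$ with $l_q\ne k_q$, $l_q\neq s_q$, $k_q\ne s_q$ ($q=1,2$). Assume moreover that $w_1^{(s_1)}v_2^{(s_2)}-w_2^{(s_1)}v_1^{(s_2)}>0$. Define the vector criterion $\mathbf{g}=(g_1,g_2)$ on $X$ by $g_1=v_2^{(s_2)}f_1+v_1^{(s_2)}f_2$, $g_2=w_2^{(s_1)}f_1+w_1^{(s_1)}f_2$. Then $\hat P_{\mathbf{g}}(Y)\subseteq P(Y)$, where $\hat P_{\mathbf{g}}(Y)=\mathbf{f}(P_{\mathbf{g}}(X))$.
   Context: For $\mathbf{a},\mathbf{b}\in\mathbb{R}^m$, $\mathbf{a}\geq\mathbf{b}$ means $a_i\ge b_i$ for all $i$ and $\mathbf{a}\neq\mathbf{b}$; $\mathbb{R}^m_+=\{\mathbf{y}\in\mathbb{R}^m:\mathbf{y}\geq\mathbf{0}_m\}$. A binary relation $\mathfrak{R}$ on $\mathbb{R}^m$ is a cone relation with cone $K$ if $\mathbf{y}^{(1)}\mathfrak{R}\,\mathbf{y}^{(2)}\iff \mathbf{y}^{(1)}-\mathbf{y}^{(2)}\in K$. The Pareto set is $P(Y)=\{\mathbf{y}^*\in Y:\ \nexists\,\mathbf{y}\in Y,\ \mathbf{y}\geq\mathbf{y}^*\}$, and for a vector criterion $\mathbf{g}$ on $X$, $P_{\mathbf{g}}(X)=\{\mathbf{x}^*\in X:\ \nexists\,\mathbf{x}\in X,\ \mathbf{g}(\mathbf{x})\geq\mathbf{g}(\mathbf{x}^*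 )\}$. Two vectors are codirectional if one is a positive multiple of the other. *)

From HB Require Import structures.
From mathcomp Require Import all_boot all_order all_algebra.
Set Implicit Arguments. Unset Strict Implicit. Unset Printing Implicit Defensive.
Import Order.TTheory GRing.Theory Num.Theory.
Local Open Scope ring_scope.

Section Defs.
Variable R : realFieldType.

Definition vgeq (m : nat) (a b : 'rV[R]_m) : Prop :=
  (forall i, b ord0 i <= a ord0 i) /\ a <> b.

Definition orthant (m : nat) (y : 'rV[R]_m) : Prop := vgeq y 0.

Definition cone_rel (m : nat) (K : 'rV[R]_m -> Prop) (y1 y2 : 'rV[R]_m) : Prop :=
  K (y1 - y2).

Definition is_cone (m : nat) (K : 'rV[R]_m -> Prop) : Prop :=
  forall y t, K y -> 0 < t -> K (t *: y).

Definition is_convex (m : nat) (K : 'rV[R]_m -> Prop) : Prop :=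
  forall y z t, K y -> K z -> 0 <= t -> t <= 1 -> K (t *: y + (1 - t) *: z).

Definition is_pointed (m : nat) (K : 'rV[R]_m -> Prop) : Prop :=
  forall y, K y -> ~ K (- y).

Definition Pareto (m : nat) (Y : 'rV[R]_m -> Prop) (ys : 'rV[R]_m) : Prop :=
  Y ys /\ ~ (exists y, Y y /\ vgeq y ys).

Definition Pareto_crit (k m : nat) (X : 'rV[R]_k -> Prop) (g : 'rV[R]_k -> 'rV[R]_m)
  (xs : 'rV[R]_k) : Prop :=
  X xs /\ ~ (exists x, X x /\ vgeq (g x) (g xs)).

Definition image_set (k m : nat) (f : 'rV[R]_k -> 'rV[R]_m) (A : 'rV[R]_k -> Prop)
  (y : 'rV[R]_m) : Prop := exists x, A x /\ f x = y.

Definition codirectional (m : nat) (a b : 'rV[R]_m) : Prop :=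
  (exists t, 0 < t /\ a = t *: b) \/ (exists t, 0 < t /\ b = t *: a).

Definition vec2 (a b : R) : 'rV[R]_2 := \row_(i < 2) if val i == 0%N then a else b.
Definition idx1 : 'I_2 := @Ordinal 2 0 isT.
Definition idx2 : 'I_2 := @Ordinal 2 1 isT.
Definition coord1 (y : 'rV[R]_2) : R := y ord0 idx1.
Definition coord2 (y : 'rV[R]_2) : R := y ord0 idx2.

Definition middle_index (D : 'I_3 -> 'I_3 -> R) (s : 'I_3) : Prop :=
  exists l kk, [/\ l != kk, l != s, kk != s, 0 < D l s & 0 < D s kk].

End Defs.

From HB Require Import structures.
From mathcomp Require Import all_boot all_order all_algebra.
From mathcomp Require Import lra ring.
Import Order.TTheory GRing.Theory Num.Theory.
Set Implicit Arguments. Unset Strict Implicit. Unset Printing Implicit Defensive.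
Local Open Scope ring_scope.

(* As all coefficients are positive, W(l, s) > 0 iff w2(l)/w1(l) < w2(s)/w1(s)
   and V(l, s) > 0 iff v1(l)/v2(l) < v1(s)/v2(s). These slopes are pairwise
   distinct, since equal slopes would make the corresponding vectors
   codirectional; so s1 and s2 are the indices of the median slopes, which
   exist and are unique among three distinct reals. For the inclusion, g = f A
   for a 2x2 matrix A with positive entries, and y |-> y A preserves the Pareto
   order >=, so an alternative that f-dominates would also g-dominate. *)

Lemma ord3_cover (a b c x : 'I_3) :
  a != b -> a != c -> b != c -> [\/ x = a, x = b | x = c].
Proof.
move=> ab ac bc; suff: [|| x == a, x == b | x == c].
  by case/or3P=> /eqP ->; [constructor 1 | constructor 2 | constructor 3].
by move: a b c x ab ac bc; do 4!case=> [[|[|[|//]]] ?].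
Qed.

Section Median3.
Variable R : realFieldType.

Lemma lt_image_neq (T : eqType) (r : T -> R) i j : r i < r j -> i != j.
Proof. by apply: contraTneq => ->; rewrite ltxx. Qed.

Lemma median3_exists (r : 'I_3 -> R) : injective r ->
  exists s l k, r l < r s < r k.
Proof.
move=> r_inj.
set a : 'I_3 := @Ordinal 3 0 isT; set b : 'I_3 := @Ordinal 3 1 isT.
set c : 'I_3 := @Ordinal 3 2 isT.
have neq i j : i != j -> r i != r j by rewrite (inj_eq r_inj).
case: (ltgtP (r a) (r b)) (neq a b isT) => // ab _;
case: (ltgtP (r a) (r c)) (neq a c isT) => // ac _;
case: (ltgtP (r b) (r c)) (neq b c isT) => // bc _;
  try (exfalso; lra);
  first [ by exists a, b, c; apply/andP; split; lra
        | by exists a, c, b; apply/andP; split; lra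
        | by exists b, a, c; apply/andP; split; lra
        | by exists b, c, a; apply/andP; split; lra
        | by exists c, a, b; apply/andP; split; lra
        | by exists c, b, a; apply/andP; split; lra ].
Qed.

Lemma median3_unique (r : 'I_3 -> R) s s' :
  (exists l k, r l < r s < r k) -> (exists l k, r l < r s' < r k) -> s = s'.
Proof.
move=> [l [k /andP[lt_ls lt_sk]]] [l' [k' /andP[lt_l's' lt_s'k']]].
have cover x : [\/ x = l, x = s | x = k].
  apply: ord3_cover; apply: lt_image_neq; [exact: lt_ls | | exact: lt_sk].
  exact: lt_trans lt_sk.
case: (cover s') lt_l's' lt_s'k' => -> // lt_l' lt_k'; exfalso.
- by case: (cover l') lt_l' => ->; lra.
- by case: (cover k') lt_k' => ->; lra.
Qed.

Lemma median3_exists_unique (r : 'I_3 -> R) : injective r ->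
  exists! s, exists l k, r l < r s < r k.
Proof.
move=> /median3_exists[s [l [k lsk]]]; exists s; split; first by exists l, k.
by move=> s'; apply: median3_unique; exists l, k.
Qed.

Lemma middle_indexE (D : 'I_3 -> 'I_3 -> R) (r : 'I_3 -> R) :
  (forall l s, (0 < D l s) = (r l < r s)) ->
  forall s, middle_index D s <-> exists l k, r l < r s < r k.
Proof.
move=> DE s; split=> [[l [k [_ _ _]]] | [l [k /andP[lt_ls lt_sk]]]].
  by rewrite !DE => lt_ls lt_sk; exists l, k; rewrite lt_ls lt_sk.
exists l, k; rewrite !DE lt_ls lt_sk; split => //.
- exact: lt_image_neq (lt_trans lt_ls lt_sk).
- exact: lt_image_neq lt_ls.
- by rewrite eq_sym; exact: lt_image_neq lt_sk.
Qed.

Lemma middle_index_exists_unique (D : 'I_3 -> 'I_3 -> R) (r : 'I_3 -> R) :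
  (forall l s, (0 < D l s) = (r l < r s)) -> injective r ->
  exists! s, middle_index D s.
Proof.
move=> DE /median3_exists_unique[s [med_s uniq_s]]; exists s.
by split=> [|s' /(middle_indexE DE)]; [apply/(middle_indexE DE) | apply: uniq_s].
Qed.

End Median3.

Section Vectors.
Variable R : realFieldType.

Lemma cross_gt0E (a b c d : R) : 0 < a -> 0 < b ->
  (0 < a * d - c * b) = (c / a < d / b).
Proof.
move=> a_gt0 b_gt0.
by rewrite subr_gt0 ltr_pdivrMr // mulrAC ltr_pdivlMr // [d * a]mulrC.
Qed.

Lemma codirectional_vec2 (a b a' b' p p' : R) : 0 < p -> 0 < p' ->
  a / p = a' / p' -> b / p = b' / p' -> codirectional (vec2 a b) (vec2 a' b').
Proof.
move=> p_gt0 p'_gt0 ea eb; left; exists (p / p'); split; first exact: divr_gt0.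
have scaleE (x x' : R) : x / p = x' / p' -> x = p / p' * x'.
  by move=> ex; rewrite mulrAC -mulrA -ex mulrC divfK // lt0r_neq0.
by apply/rowP => i; rewrite !mxE; case: ifP => _; apply: scaleE.
Qed.

Definition mx2 (a b c d : R) : 'M[R]_2 :=
  \matrix_(i, j) if val i == 0%N then (if val j == 0%N then a else b)
                 else (if val j == 0%N then c else d).

Lemma mulmx_mx2 (y : 'rV[R]_2) (a b c d : R) :
  y *m mx2 a b c d =
  vec2 (a * coord1 y + c * coord2 y) (b * coord1 y + d * coord2 y).
Proof.
rewrite /coord1 /coord2; apply/rowP => j.
rewrite !mxE big_ord_recl big_ord1 !mxE /=.
have -> : idx1 = ord0 by apply: val_inj.
have -> : idx2 = lift ord0 ord0 by apply: val_inj.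
by case: ifP => _; ring.
Qed.

Lemma mx2_gt0 (a b c d : R) : 0 < a -> 0 < b -> 0 < c -> 0 < d ->
  forall i j, 0 < mx2 a b c d i j.
Proof. by move=> *; rewrite mxE; do 2!case: ifP => _. Qed.

Lemma vgeq_mulmx (m n : nat) (A : 'M[R]_(m, n.+1)) (y y' : 'rV[R]_m) :
  (forall i j, 0 < A i j) -> vgeq y' y -> vgeq (y' *m A) (y *m A).
Proof.
move=> A_gt0 [le_yy' neq_yy'].
have mulBE j : (y' *m A) ord0 j - (y *m A) ord0 j
               = \sum_i (y' ord0 i - y ord0 i) * A i j.
  by rewrite !mxE -sumrB; apply: eq_bigr => i _; rewrite mulrBl.
have term_ge0 j i : 0 <= (y' ord0 i - y ord0 i) * A i j.
  by rewrite mulr_ge0 ?subr_ge0 // ltW.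
split=> [j | eq_yA]; first by rewrite -subr_ge0 mulBE sumr_ge0.
apply: neq_yy'; apply/rowP => i; apply/eqP; rewrite -subr_eq0.
have sum0 : \sum_i (y' ord0 i - y ord0 i) * A i ord0 = 0.
  by rewrite -mulBE eq_yA subrr.
have /eqP := psumr_eq0P (fun i _ => term_ge0 ord0 i) sum0 (i := i) isT.
by rewrite mulf_eq0 (gt_eqF (A_gt0 i ord0)) orbF; apply.
Qed.

Lemma Pareto_image_of_vgeq_mono (k m n : nat) (X : 'rV[R]_k -> Prop)
    (f : 'rV[R]_k -> 'rV[R]_m) (h : 'rV[R]_m -> 'rV[R]_n)
    (g : 'rV[R]_k -> 'rV[R]_n) :
  (forall a b, vgeq a b -> vgeq (h a) (h b)) -> (forall x, g x = h (f x)) ->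
  forall y, image_set f (Pareto_crit X g) y -> Pareto (image_set f X) y.
Proof.
move=> h_mono gE y [x [[Xx no_dom] <-]]; split; first by exists x.
move=> [_ [[x' [Xx' <-]] dom]]; apply: no_dom; exists x'; split=> //.
by rewrite !gE; apply: h_mono.
Qed.

End Vectors.

Unset Implicit Arguments.

Theorem theorem3 (R : realFieldType) (k : nat)
  (X : 'rV[R]_k -> Prop) (f : 'rV[R]_k -> 'rV[R]_2)
  (K : 'I_3 -> 'rV[R]_2 -> Prop)
  (w1 w2 v1 v2 : 'I_3 -> R) :
  (forall l, [/\ is_cone (K l), is_convex (K l), is_pointed (K l),
                 (forall y, orthant y -> K l y) & ~ K l 0]) ->
  (forall l, [/\ 0 < w1 l, 0 < w2 l, 0 < v1 l & 0 < v2 l]) ->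
  (forall l, cone_rel (K l) (vec2 (w1 l) (- w2 l)) 0) ->
  (forall l, cone_rel (K l) (vec2 (- v1 l) (v2 l)) 0) ->
  (forall l s, l != s ->
     ~ codirectional (vec2 (w1 l) (- w2 l)) (vec2 (w1 s) (- w2 s))) ->
  (forall l s, l != s ->
     ~ codirectional (vec2 (- v1 l) (v2 l)) (vec2 (- v1 s) (v2 s))) ->
  (forall l, 0 < w1 l * v2 l - w2 l * v1 l) ->
  let W := fun l s => w1 l * w2 s - w2 l * w1 s in
  let V := fun l s => v2 l * v1 s - v1 l * v2 s in
  let Y := image_set f X in
  [/\ (exists! s1, middle_index W s1),
      (exists! s2, middle_index V s2) &
      forall s1 s2, middle_index W s1 -> middle_index V s2 ->
        0 < w1 s1 * v2 s2 - w2 s1 * v1 s2 ->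
        let g := fun x => vec2 (v2 s2 * coord1 (f x) + v1 s2 * coord2 (f x))
                               (w2 s1 * coord1 (f x) + w1 s1 * coord2 (f x)) in
        forall y, image_set f (Pareto_crit X g) y -> Pareto Y y].
Proof.
move=> _ pos _ _ noncodir_w noncodir_v _ W V Y.
have [w1_gt0 w2_gt0 v1_gt0 v2_gt0] : [/\ forall l, 0 < w1 l, forall l, 0 < w2 l,
    forall l, 0 < v1 l & forall l, 0 < v2 l] by split=> l; case: (pos l).
have divff_eq (p : 'I_3 -> R) l s : (forall i, 0 < p i) -> p l / p l = p s / p s.
  by move=> p_gt0; rewrite !divff ?lt0r_neq0.
split.
- apply: (middle_index_exists_unique (r := fun l => w2 l / w1 l)).
    by move=> l s; apply: cross_gt0E.
  move=> l s /= eq_ls; case: (eqVneq l s) => // /noncodir_w[].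
  apply: (codirectional_vec2 (w1_gt0 l) (w1_gt0 s)) => //; first exact: divff_eq.
  by rewrite !mulNr eq_ls.
- apply: (middle_index_exists_unique (r := fun l => v1 l / v2 l)).
    by move=> l s; apply: cross_gt0E.
  move=> l s /= eq_ls; case: (eqVneq l s) => // /noncodir_v[].
  apply: (codirectional_vec2 (v2_gt0 l) (v2_gt0 s)) => //; last exact: divff_eq.
  by rewrite !mulNr eq_ls.
- move=> s1 s2 _ _ _ g.
  pose A := mx2 (v2 s2) (w2 s1) (v1 s2) (w1 s1).
  apply: (Pareto_image_of_vgeq_mono (h := mulmxr A)).
    by move=> a b; apply: vgeq_mulmx; apply: mx2_gt0.
  by move=> x; rewrite /= mulmx_mx2.
Qed.
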